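(* Let $\kappa\in\mathbb{C}$, $0\le n\le N$, and let $\lambda_1,\dots,\lambda_N,z_1,\dots,z_n$ be generic. Consider $F(z_{n+1},\dots,z_N)=\det_N\Omega_\kappa(\{z_1,\dots,z_N\},\{\lambda_1,\dots,\lambda_N\}|\{z_1,\dots,z_N\})$ as a meromorphic function of $z_{n+1},\dots,z_N$. Then the iterated residue of $F$ at $z_{n+1}=\lambda_{n+1},\dots,z_N=\lambda_N$ equals $$\prod_{a=n+1}^N\mathcal Y_\kappa\bigl(\lambda_a\big|\{z_1,\dots,z_n,\lambda_{n+1},\dots,\lambda_N\}\bigr)\cdot\det_n\Omega_\kappa\bigl(\{z_1,\dots,z_n\},\{\lambda_1,\dots,\lambda_n\}\big|\{z_1,\dots,z_n,\lambda_{n+1},\dots,\lambda_N\}\bigr).$$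
   Context: Fix $\eta\in\mathbb{C}$ with $\sinh\eta\ne0$ and $\xi_1,\dots,\xi_M\in\mathbb{C}$. $a(\lambda)=\prod_{j=1}^M\sinh(\lambda-\xi_j+\eta)$, $d(\lambda)=\prod_{j=1}^M\sinh(\lambda-\xi_j)$, $t(\lambda,\mu)=\frac{\sinh\eta}{\sinh(\lambda-\mu)\sinh(\lambda-\mu+\eta)}$. For a set $\{\nu_1..\nu_L\}$, $\mathcal Y_\kappa(\mu|\{\nu\})=a(\mu)\prod_{k=1}^L\sinh(\nu_k-\mu+\eta)+\kappa d(\mu)\prod_{k=1}^L\sinh(\nu_k-\mu-\eta)$. For sets $\{\lambda_1..\lambda_n\}$, $\{\mu_1..\mu_n\}$, $\{\nu_1..\nu_{n'}\}$, $\Omega_\kappa(\{\lambda\},\{\mu\}|\{\nu\})$ is the $n\times n$ matrix with $(\Omega_\kappa)_{jk}=a(\mu_k)t(\lambda_j,\mu_k)\prod_{c=1}^{n'}\sinh(\nu_c-\mu_k+\eta)-\kappa\,d(\mu_k)t(\mu_k,\lambda_j)\prod_{c=1}^{n'}\sinh(\nu_c-\mu_k-\eta)$ (rows indexed by the first set, columns by the second). *)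

From HB Require Import structures.
From mathcomp Require Import all_boot all_order all_algebra.
From mathcomp Require Import all_classical all_reals all_analysis.
From mathcomp Require Import complex.
Import Order.TTheory GRing.Theory Num.Theory.
Import numFieldTopology.Exports numFieldNormedType.Exports.
Set Implicit Arguments. Unset Strict Implicit. Unset Printing Implicit Defensive.
Local Open Scope ring_scope.
Local Open Scope complex_scope.
Local Open Scope classical_set_scope.

Definition Cplx (R : realType) : Type := R[i].
HB.instance Definition _ (R : realType) := Num.ClosedField.on (Cplx R).
HB.instance Definition _ (R : realType) :=
  PseudoPointedMetric.copy (Cplx R) (Cplx R)^o.

Section Defs.
Variable R : realType.
Local Notation C := (Cplx R).

Definition cexp (z : C) : C :=
  let: x +i* y := z in ((expR x)%:C * (cos y +i* sin y)%C)%R.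

Definition csinh (z : C) : C := (cexp z - cexp (- z)) / 2%:R.

Definition afun (eta : C) (xi : seq C) (l : C) : C :=
  \prod_(x <- xi) csinh (l - x + eta).
Definition dfun (xi : seq C) (l : C) : C :=
  \prod_(x <- xi) csinh (l - x).

Definition tfun (eta l m : C) : C :=
  csinh eta / (csinh (l - m) * csinh (l - m + eta)).

Definition Yfun (eta : C) (xi : seq C) (kappa mu : C) (nu : seq C) : C :=
  afun eta xi mu * \prod_(v <- nu) csinh (v - mu + eta)
  + kappa * dfun xi mu * \prod_(v <- nu) csinh (v - mu - eta).

Definition Omega (eta : C) (xi : seq C) (kappa : C) (n : nat)
    (lam mu nu : seq C) : 'M[C]_n :=
  \matrix_(j < n, k < n)
    (afun eta xi (nth 0 mu k) * tfun eta (nth 0 lam j) (nth 0 mu k)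
       * \prod_(v <- nu) csinh (v - nth 0 mu k + eta)
     - kappa * dfun xi (nth 0 mu k) * tfun eta (nth 0 mu k) (nth 0 lam j)
       * \prod_(v <- nu) csinh (v - nth 0 mu k - eta)).

(* Residue of f at a (simple) pole l:  lim_{z -> l, z <> l} (z - l) f(z). *)
Definition residue (f : C -> C) (l : C) : C :=
  lim ((fun z => (z - l) * f z) @ l^').

(* Iterated residue of a function F of the variables (w_1, ..., w_m)
   (passed as a list) at w_1 = l_1, ..., w_m = l_m: first the residue in
   w_1 is taken (the other variables being held fixed), then in w_2, ... *)
Fixpoint iter_residue (F : seq C -> C) (ls : seq C) : C :=
  match ls with
  | [::] => F [::]
  | l :: ls' => iter_residue (fun ws => residue (fun w => F (w :: ws)) l) ls'
  end.

Definition generic_points (eta : C) (s : seq C) : Prop :=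
  forall i j : nat, (i < size s)%N -> (j < size s)%N -> i <> j ->
    csinh (nth 0 s i - nth 0 s j) <> 0 /\
    csinh (nth 0 s i - nth 0 s j + eta) <> 0.

End Defs.

From HB Require Import structures.
From mathcomp Require Import all_boot all_order all_algebra.
From mathcomp Require Import all_classical all_reals all_analysis.
From mathcomp Require Import complex.
From mathcomp Require Import ring zify.
Import Order.TTheory GRing.Theory Num.Theory.
Import numFieldTopology.Exports numFieldNormedType.Exports.
Local Open Scope ring_scope.
Local Open Scope classical_set_scope.

(* In Omega_kappa({z, w}, {lambda} | {z, w}) the variable w_a has a pole at lambda_a only
   in the diagonal entry (a, a): through t(w_a, lambda_a) and t(lambda_a, w_a) that entry
   has residue Y_kappa(lambda_a | {z, w}), because (w - l) / sinh (w - l) -> 1, while by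
   genericity the other entries of row a and column a stay finite, w_a entering them
   only through continuous products over nu.  Expanding along row a, the residue of the
   determinant is Y_kappa(lambda_a | ...) times the complementary minor, which is again an
   Omega matrix: the row of w_a and the column of lambda_a are deleted, while lambda_a
   stays in the list nu.  Iterating over a = n+1, ..., N, with the product of the Y's
   obtained so far as a prefactor that is continuous in the remaining variables, gives
   the theorem. *)

Section RealSlope.
Context {R : realType}.

(* The value [d] at 0 makes [slope0 f d] continuous at 0 when [d] is the derivative of
   [f] there, so [slope0E] can be used without dividing by a possibly vanishing [x]. *)
Definition slope0 (f : R -> R) (d x : R) : R :=
  if x == 0 then d else (f x - f 0) / x.

Lemma slope0E f d x : f x = f 0 + x * slope0 f d x.
Proof.
rewrite /slope0; have [->|xN0] := eqVneq x 0; first by rewrite mul0r addr0.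
by rewrite mulrC divfK // addrC subrK.
Qed.

Lemma slope0_cvg f d : is_derive (0 : R) 1 f d -> slope0 f d @ 0 --> d.
Proof.
move=> fd; have sl0 : slope0 f d 0 = d by rewrite /slope0 eqxx.
rewrite -{2}sl0; apply/continuous_withinNx; rewrite sl0.
case: fd => f_der <-; apply: cvg_trans f_der; apply: near_eq_cvg; near=> h.
have hN0 : h != 0 by near: h; exact: nbhs_dnbhs_neq.
by rewrite /slope0 (negbTE hN0) /= /GRing.scale /= mulr1 addr0 mulrC.
Unshelve. all: by end_near. Qed.

End RealSlope.

Section ComplexLimits.
Context {R : realType}.
Local Notation C := (Cplx R).
Local Open Scope complex_scope.
Local Notation Re := complex.Re.
Local Notation Im := complex.Im.

Lemma Cplx_hausdorff : hausdorff_space C.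
Proof. exact: (@norm_hausdorff _ C^o). Qed.

Lemma normc_ge_Im (z : C) : `|Im z|%:C <= `|z|.
Proof.
have ReNiz : Re (- 'i * z) = Im z by case: z => x y /=; rewrite oppr0 mul0r add0r mulN1r opprK.
have normi : `|'i : C| = 1 by rewrite normc_def /= expr0n expr1n add0r sqrtr1.
have -> : `|z| = `|- 'i * z| by rewrite normrM normrN normi mul1r.
by rewrite -ReNiz normc_ge_Re.
Qed.

Lemma normc_real (x : R) : `|x%:C : C| = `|x|%:C.
Proof. by rewrite normc_def /= expr0n addr0 sqrtr_sqr. Qed.

Lemma cexpE (z : C) :
  cexp z = (expR (Re z))%:C * ((cos (Im z))%:C + 'i * (sin (Im z))%:C).
Proof. by case: z => x y /=; congr (_ * _); rewrite [LHS]complexE. Qed.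

Lemma continuous_addC : continuous (fun z : C * C => z.1 + z.2).
Proof. by move=> z; apply: (@cvgD _ C^o); [exact: cvg_fst | exact: cvg_snd]. Qed.

Section FilterLimits.
Context {T : Type} (F : set_system T) {FF : Filter F}.
Implicit Types (f g u : T -> C) (a b : C).

Lemma cvgCP {f a} :
  f @ F --> a <-> forall e : C, 0 < e -> \forall t \near F, `|a - f t| < e.
Proof. exact: (@cvgrPdist_lt _ C^o). Qed.

Lemma cvgC_cst (a : C) : (fun _ => a) @ F --> a.
Proof. exact: cvg_cst. Qed.

Lemma cvgCD {f g a b} : f @ F --> a -> g @ F --> b -> (fun t => f t + g t) @ F --> a + b.
Proof. exact: (@cvgD _ C^o). Qed.

Lemma cvgCN {f a} : f @ F --> a -> (fun t => - f t) @ F --> - a.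
Proof. exact: (@cvgN _ C^o). Qed.

Lemma cvgCB {f g a b} : f @ F --> a -> g @ F --> b -> (fun t => f t - g t) @ F --> a - b.
Proof. exact: (@cvgB _ C^o). Qed.

Lemma cvgCM {f g a b} : f @ F --> a -> g @ F --> b -> (fun t => f t * g t) @ F --> a * b.
Proof. exact: cvgM. Qed.

Lemma cvgCV {f a} : a != 0 -> f @ F --> a -> (fun t => (f t)^-1) @ F --> a^-1.
Proof. exact: cvgV. Qed.

Lemma cvg_Re {f a} : f @ F --> a -> (fun t => Re (f t)) @ F --> Re a.
Proof.
move=> /cvgCP fa; apply/cvgrPdist_lt => e e0.
have /fa : 0 < e%:C :> C by rewrite ltcR.
apply: filterS => t /(le_lt_trans (normc_ge_Re _)); rewrite ltcR.
by rewrite -raddfB.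
Qed.

Lemma cvg_Im {f a} : f @ F --> a -> (fun t => Im (f t)) @ F --> Im a.
Proof.
move=> /cvgCP fa; apply/cvgrPdist_lt => e e0.
have /fa : 0 < e%:C :> C by rewrite ltcR.
apply: filterS => t /(le_lt_trans (normc_ge_Im _)); rewrite ltcR.
by rewrite -raddfB.
Qed.

Lemma cvg_real_complex {g : T -> R} {x : R} :
  g @ F --> x -> (fun t => (g t)%:C : C) @ F --> (x%:C : C).
Proof.
move=> /cvgrPdist_lt gx; apply/cvgCP => e; rewrite ltcE /= => /andP[/eqP Ie0 e0].
have -> : e = (Re e)%:C by case: e Ie0 {e0} => ? ? /= ->.
by apply: filterS (gx _ e0) => t; rewrite -rmorphB normc_real ltcR.
Qed.

Lemma cvgM_bounded0 {f g} :
  f @ F --> 0 -> (forall t, `|g t| <= 1) -> (fun t => f t * g t) @ F --> 0.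
Proof.
move=> /cvgCP f0 g1; apply/cvgCP => e /f0; apply: filterS => t.
rewrite !sub0r !normrN normrM; apply: le_lt_trans.
by rewrite -[leRHS]mulr1 ler_wpM2l.
Qed.

Lemma cvg_cexp {u a} : u @ F --> a -> (fun t => cexp (u t)) @ F --> cexp a.
Proof.
move=> ua; rewrite cexpE; under eq_fun do rewrite cexpE.
have real_cvg (h : R -> R) (v : T -> R) x : continuous h -> v @ F --> x ->
    (fun t => (h (v t))%:C : C) @ F --> ((h x)%:C : C).
  by move=> hc vx; apply: cvg_real_complex; exact: continuous_cvg _ (hc x) vx.
apply: cvgCM; first by apply: (real_cvg expR); [exact: continuous_expR | exact: cvg_Re].
apply: cvgCD; first by apply: (real_cvg cos); [exact: continuous_cos | exact: cvg_Im].
by apply: cvgMl_tmp; apply: (real_cvg sin); [exact: continuous_sin | exact: cvg_Im].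
Qed.

Lemma cvg_csinh {u a} : u @ F --> a -> (fun t => csinh (u t)) @ F --> csinh a.
Proof.
move=> ua; apply: cvgMr_tmp; apply: cvgCB; first exact: cvg_cexp.
exact/cvg_cexp/cvgCN.
Qed.

Lemma cvg_cexpB1_div {u} : u @ F --> 0 -> (\forall t \near F, u t != 0) ->
  (fun t => (cexp (u t) - 1) / u t) @ F --> (1 : C).
Proof.
(* With u = a + i b, exp a = 1 + a SE, cos b = 1 + b SC and sin b = b SS, one gets
   (cexp u - 1) / u = 1 + X (a / u) + Y (b / u), where X, Y -> 0 and the two
   quotients have modulus at most 1. *)
move=> u0 uN0.
pose A t : C := (Re (u t))%:C; pose B t : C := (Im (u t))%:C.
pose SE t : C := (slope0 expR 1 (Re (u t)))%:C.
pose SC t : C := (slope0 cos 0 (Im (u t)))%:C.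
pose SS t : C := (slope0 sin 1 (Im (u t)))%:C.
pose X t := SE t * (1 + B t * SC t + 'i * (B t * SS t)) - 1.
pose Y t := SC t + 'i * (SS t - 1).
have uE t : u t = A t + 'i * B t := complexE (u t).
have cexp_slope t : cexp (u t) - 1 = A t + 'i * B t + X t * A t + Y t * B t.
  rewrite /X /Y /A /B /SE /SC /SS cexpE; move: (Re (u t)) (Im (u t)) => x y.
  rewrite [expR x](slope0E _ 1) [cos y](slope0E _ 0) [sin y](slope0E _ 1).
  by rewrite expR0 cos0 sin0 !rmorphD !rmorphM rmorph1 rmorph0; ring.
have Re0 : (fun t => Re (u t)) @ F --> (0 : R) by have := cvg_Re u0; rewrite (_ : Re 0 = 0).
have Im0 : (fun t => Im (u t)) @ F --> (0 : R) by have := cvg_Im u0; rewrite (_ : Im 0 = 0).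
have B0 : B @ F --> (0 : C) := cvg_real_complex Im0.
have SE1 : SE @ F --> (1 : C).
  apply: cvg_real_complex; apply: cvg_comp Re0 _.
  by apply: slope0_cvg; have := is_derive_expR (0 : R); rewrite expR0.
have SC0 : SC @ F --> (0 : C).
  apply: cvg_real_complex; apply: cvg_comp Im0 _.
  by apply: slope0_cvg; have := is_derive_cos (0 : R); rewrite sin0 oppr0.
have SS1 : SS @ F --> (1 : C).
  apply: cvg_real_complex; apply: cvg_comp Im0 _.
  by apply: slope0_cvg; have := is_derive_sin (0 : R); rewrite cos0.
have BSC0 : (fun t => B t * SC t) @ F --> (0 : C).
  by rewrite -(mul0r (0 : C)); exact: cvgCM B0 SC0.
have iBSS0 : (fun t => 'i * (B t * SS t)) @ F --> (0 : C).
  rewrite -(mulr0 ('i : C)) -(mul0r (1 : C)).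
  exact: cvgCM (cvgC_cst _) (cvgCM B0 SS1).
have X0 : X @ F --> (0 : C).
  rewrite (_ : 0 = 1 * (1 + 0 + 0) - 1); last by rewrite !addr0 mul1r subrr.
  exact: cvgCB (cvgCM SE1 (cvgCD (cvgCD (cvgC_cst (1 : C)) BSC0) iBSS0)) (cvgC_cst (1 : C)).
have Y0 : Y @ F --> (0 : C).
  rewrite (_ : 0 = 0 + 'i * (1 - 1)); last by rewrite subrr mulr0 addr0.
  exact: cvgCD SC0 (cvgCM (cvgC_cst _) (cvgCB SS1 (cvgC_cst _))).
have bounded (v : T -> R) : (forall t, `|v t|%:C <= `|u t|) ->
    forall t, `|(v t)%:C / u t| <= 1.
  move=> vu t; have [->|ut0] := eqVneq (u t) 0; first by rewrite invr0 mulr0 normr0.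
  by rewrite normf_div ler_pdivrMr ?normr_gt0 // mul1r normc_real.
have L : (fun t => 1 + X t * (A t / u t) + Y t * (B t / u t)) @ F --> (1 : C).
  rewrite {2}(_ : (1 : C) = 1 + 0 + 0); last by rewrite !addr0.
  exact: cvgCD (cvgCD (cvgC_cst _) (cvgM_bounded0 X0 (bounded _ (fun t => normc_ge_Re (u t)))))
               (cvgM_bounded0 Y0 (bounded _ (fun t => normc_ge_Im (u t)))).
apply: (@cvg_trans _ _ _ _ _ L); apply: near_eq_cvg.
by apply: filterS uN0 => t ut0; rewrite cexp_slope -uE; field.
Qed.

Lemma cvg_div_csinh {u} : u @ F --> 0 -> (\forall t \near F, u t != 0) ->
  (fun t => u t / csinh (u t)) @ F --> (1 : C).
Proof.
move=> u0 uN0.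
have Nu0 : (fun t => - u t) @ F --> (0 : C) by rewrite -oppr0; exact: cvgCN.
have NuN0 : \forall t \near F, - u t != 0 by apply: filterS uN0 => t; rewrite oppr_eq0.
have csinh_div1 : (fun t => csinh (u t) / u t) @ F --> (1 : C).
  have L := cvgCM (cvgCD (cvg_cexpB1_div u0 uN0) (cvg_cexpB1_div Nu0 NuN0))
                  (cvgC_cst (2%:R^-1 : C)).
  rewrite (_ : (1 : C) = (1 + 1) * 2%:R^-1); last by rewrite -mulr2n divff // pnatr_eq0.
  apply: (@cvg_trans _ _ _ _ _ L); apply: near_eq_cvg.
  apply: filterS uN0 => t ut0; rewrite /csinh.
  by field; rewrite ?ut0 ?oppr_eq0 ?pnatr_eq0.
have := cvgCV (oner_neq0 C) csinh_div1; rewrite invr1 => L.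
apply: (@cvg_trans _ _ _ _ _ L); apply: near_eq_cvg; apply: nearW => t.
by rewrite /= invf_div.
Qed.

Lemma cvg_det {n} {M : T -> 'M[C]_n} {A : 'M[C]_n} :
  (forall i j, (fun t => M t i j) @ F --> A i j) ->
  (fun t => \det (M t)) @ F --> \det A.
Proof.
move=> MA; apply: cvg_big => [|s _]; first exact: continuous_addC.
apply: cvgCM; first exact: cvgC_cst.
by apply: cvg_big => //; exact: mul_continuous.
Qed.

Lemma cvg_mul_det_row {n} (r : 'I_n) (phi : T -> C) (M : T -> 'M[C]_n)
    (A : 'M[C]_n) (Y : C) :
  (forall i j, i != r -> (fun t => M t i j) @ F --> A i j) ->
  (forall j, j != r -> (fun t => phi t * M t r j) @ F --> 0) ->
  (fun t => phi t * M t r r) @ F --> Y ->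
  (fun t => phi t * \det (M t)) @ F --> Y * cofactor A r r.
Proof.
move=> Moff Mrow Mdiag.
have -> : (fun t => phi t * \det (M t)) =
          (fun t => \sum_j (phi t * M t r j) * cofactor (M t) r j).
  apply: funext => t; rewrite (expand_det_row _ r) big_distrr /=.
  by apply: eq_bigr => j _; rewrite mulrA.
have -> : Y * cofactor A r r = \sum_j (if j == r then Y else 0) * cofactor A r j.
  by rewrite (bigD1 r) //= eqxx big1 ?addr0 // => j /negbTE ->; rewrite mul0r.
apply: cvg_big => [|j _]; first exact: continuous_addC.
apply: cvgCM; first by case: eqP => [->|/eqP]; [exact: Mdiag | exact: Mrow].
apply: cvgCM; first exact: cvgC_cst.
apply: cvg_det => i k; under eq_fun do rewrite !mxE.
by rewrite !mxE; apply: Moff; rewrite eq_sym neq_lift.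
Qed.

End FilterLimits.

Lemma cvg_sub_dnbhs (l : C) : (fun w => w - l) @ l^' --> (0 : C).
Proof.
rewrite -(subrr l); apply: cvg_within_filter.
by apply: (@cvgB _ C^o); [exact: cvg_id | exact: cvg_cst].
Qed.

Lemma cvg_sub_div_csinh (l : C) :
  (fun w => (w - l) / csinh (w - l)) @ l^' --> (1 : C).
Proof.
apply: cvg_div_csinh; first exact: cvg_sub_dnbhs.
by apply: filterS (nbhs_dnbhs_neq l) => w; rewrite subr_eq0.
Qed.

Lemma continuous_idC : continuous (fun w : C => w).
Proof. by move=> ?; exact: cvg_id. Qed.

Lemma continuous_cstC (a : C) : continuous (fun _ : C => a).
Proof. exact: cst_continuous. Qed.

Lemma continuousCD {f g : C -> C} :
  continuous f -> continuous g -> continuous (fun w => f w + g w).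
Proof. by move=> fc gc x; exact: (cvgCD (nbhs x) (fc x) (gc x)). Qed.

Lemma continuousCB {f g : C -> C} :
  continuous f -> continuous g -> continuous (fun w => f w - g w).
Proof. by move=> fc gc x; exact: (cvgCB (nbhs x) (fc x) (gc x)). Qed.

Lemma continuousCM {f g : C -> C} :
  continuous f -> continuous g -> continuous (fun w => f w * g w).
Proof. by move=> fc gc x; exact: (cvgCM (nbhs x) (fc x) (gc x)). Qed.

Lemma continuous_csinh_of {f : C -> C} :
  continuous f -> continuous (fun w => csinh (f w)).
Proof. by move=> fc x; exact: (cvg_csinh (nbhs x) (fc x)). Qed.

Definition separately_continuous (c : seq C -> C) :=
  forall s1 s2 : seq C, continuous (fun w => c (s1 ++ w :: s2)).

Lemma csinhN (x : C) : csinh (- x) = - csinh x.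
Proof. by rewrite /csinh opprK -mulNr opprB. Qed.

Lemma continuous_csinh_shift (a b : C) : continuous (fun v : C => csinh (v - a + b)).
Proof.
apply: continuous_csinh_of; apply: continuousCD; last exact: continuous_cstC.
by apply: continuousCB; [exact: continuous_idC | exact: continuous_cstC].
Qed.

Lemma continuous_prod_insert {g : C -> C} {s1 s2 : seq C} :
  continuous g -> continuous (fun w => \prod_(v <- s1 ++ w :: s2) g v).
Proof.
move=> gc; under eq_fun do rewrite big_cat big_cons.
apply: continuousCM; first exact: continuous_cstC.
by apply: continuousCM; [exact: gc | exact: continuous_cstC].
Qed.

End ComplexLimits.

Section SeqSurgery.
Context {T : Type} (x0 : T).

Lemma nth_bump (s : seq T) (k i : nat) :
  nth x0 s (bump k i) = nth x0 (take k s ++ drop k.+1 s) i.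
Proof.
rewrite /bump nth_cat size_take.
case: (ltnP k (size s)) => ks.
  case: (ltnP i k) => ik; first by rewrite add0n nth_take.
  by rewrite add1n nth_drop; congr nth; lia.
case: (ltnP i (size s)) => i_s.
  have -> : (k <= i)%N = false by apply/negbTE; rewrite -ltnNge; exact: leq_trans i_s ks.
  by rewrite add0n nth_take //; exact: leq_trans i_s ks.
rewrite drop_oversize ?nth_nil; last exact: leq_trans ks _.
by rewrite nth_default //; case: (k <= i)%N => /=; lia.
Qed.

Lemma nth_cat_size_cons (s1 s2 : seq T) (w : T) : nth x0 (s1 ++ w :: s2) (size s1) = w.
Proof. by rewrite nth_cat ltnn subnn. Qed.

Lemma nth_cat_cons_other (s1 s2 : seq T) (w w' : T) (i : nat) : i != size s1 ->
  nth x0 (s1 ++ w :: s2) i = nth x0 (s1 ++ w' :: s2) i.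
Proof.
rewrite !nth_cat; case: ltnP => // s1i i_s1.
by rewrite -(subnSK (_ : size s1 < i)%N) // ltn_neqAle eq_sym i_s1.
Qed.

Lemma take_drop_cat_cons (s1 s2 : seq T) (w : T) :
  take (size s1) (s1 ++ w :: s2) ++ drop (size s1).+1 (s1 ++ w :: s2) = s1 ++ s2.
Proof. by rewrite take_size_cat // -add1n -drop_drop drop_size_cat //= drop0. Qed.

End SeqSurgery.

Section Genericity.
Context {R : realType} {eta : Cplx R}.
Local Notation C := (Cplx R).

Lemma generic_points_catr {s1 s2 : seq C} :
  generic_points eta (s1 ++ s2) -> generic_points eta s2.
Proof.
move=> G i j i_s2 j_s2 ij.
have shift k : (size s1 + k < size s1)%N = false by rewrite ltnNge leq_addr.
have := G (size s1 + i)%N (size s1 + j)%N.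
rewrite size_cat !ltn_add2l !nth_cat !shift !addKn; apply => // /addnI.
exact: ij.
Qed.

Lemma generic_pointsP {s : seq C} {i j : nat} : generic_points eta s ->
  (i < size s)%N -> (j < size s)%N -> i != j ->
  csinh (nth 0 s i - nth 0 s j) != 0 /\ csinh (nth 0 s i - nth 0 s j + eta) != 0.
Proof. by move=> G i_s j_s /eqP ij; have [/eqP ? /eqP ?] := G i j i_s j_s ij. Qed.

Lemma generic_points_del {s : seq C} (k : nat) :
  generic_points eta s -> generic_points eta (take k s ++ drop k.+1 s).
Proof.
move=> G i j i_s j_s ij; rewrite -!nth_bump.
have bump_lt x : (x < size (take k s ++ drop k.+1 s))%N -> (bump k x < size s)%N.
  rewrite size_cat size_take size_drop /bump.
  by case: (ltnP k (size s)); case: (leqP k x) => /=; lia.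
apply: G; [exact: bump_lt | exact: bump_lt |].
by move=> /(congr1 (unbump k)); rewrite !bumpK.
Qed.

End Genericity.

Section OmegaResidues.
Context {R : realType}.
Local Notation C := (Cplx R).
Variables (eta : C) (xi : seq C) (kappa : C).
Hypothesis eta_neq0 : csinh eta != 0.

Definition omega_entry (rho mu : C) (nu : seq C) : C :=
  afun eta xi mu * tfun eta rho mu * \prod_(v <- nu) csinh (v - mu + eta)
  - kappa * dfun xi mu * tfun eta mu rho * \prod_(v <- nu) csinh (v - mu - eta).

Lemma OmegaE n (rows cols nu : seq C) (j k : 'I_n) :
  Omega eta xi kappa n rows cols nu j k = omega_entry (nth 0 rows j) (nth 0 cols k) nu.
Proof. by rewrite mxE. Qed.

Lemma Omega_perm {n} {rows cols nu nu' : seq C} : perm_eq nu nu' ->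
  Omega eta xi kappa n rows cols nu = Omega eta xi kappa n rows cols nu'.
Proof.
by move=> p; apply/matrixP => j k; rewrite !OmegaE /omega_entry !(perm_big _ p).
Qed.

Lemma Yfun_perm (mu : C) (nu nu' : seq C) : perm_eq nu nu' ->
  Yfun eta xi kappa mu nu = Yfun eta xi kappa mu nu'.
Proof. by move=> p; rewrite /Yfun !(perm_big _ p). Qed.

Lemma continuous_omega_entry_nu (rho mu : C) (s1 s2 : seq C) :
  continuous (fun w => omega_entry rho mu (s1 ++ w :: s2)).
Proof.
apply: continuousCB; apply: continuousCM;
  by [exact: continuous_cstC | exact: continuous_prod_insert (continuous_csinh_shift _ _)].
Qed.

Lemma continuous_Yfun_nu (mu : C) (s1 s2 : seq C) :
  continuous (fun w => Yfun eta xi kappa mu (s1 ++ w :: s2)).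
Proof.
apply: continuousCD; apply: continuousCM;
  by [exact: continuous_cstC | exact: continuous_prod_insert (continuous_csinh_shift _ _)].
Qed.

Lemma tfun_continuous (f g : C -> C) (x : C) : continuous f -> continuous g ->
  csinh (f x - g x) != 0 -> csinh (f x - g x + eta) != 0 ->
  {for x, continuous (fun w => tfun eta (f w) (g w))}.
Proof.
move=> fc gc fgx0 fgex0; have dc : continuous (fun w => f w - g w) := continuousCB fc gc.
apply: (cvgCM (nbhs x)); first exact: continuous_cstC.
apply: (cvgCV (nbhs x)); first exact: mulf_neq0.
apply: (cvgCM (nbhs x)); first exact: (continuous_csinh_of dc x).
have dec : continuous (fun w => f w - g w + eta) := continuousCD dc (continuous_cstC eta).
exact: (continuous_csinh_of dec x).
Qed.

Lemma omega_entry_row_continuous (mu : C) (s1 s2 : seq C) (x : C) :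
  csinh (x - mu) != 0 -> csinh (x - mu + eta) != 0 ->
  csinh (mu - x) != 0 -> csinh (mu - x + eta) != 0 ->
  {for x, continuous (fun w => omega_entry w mu (s1 ++ w :: s2))}.
Proof.
move=> h1 h2 h3 h4; rewrite /omega_entry.
apply: (cvgCB (nbhs x)).
- apply: (cvgCM (nbhs x)); last exact: (continuous_prod_insert (continuous_csinh_shift _ _) x).
  apply: (cvgCM (nbhs x)); first exact: continuous_cstC.
  exact: tfun_continuous continuous_idC (continuous_cstC mu) h1 h2.
- apply: (cvgCM (nbhs x)); last exact: (continuous_prod_insert (continuous_csinh_shift _ _) x).
  apply: (cvgCM (nbhs x)); first exact: continuous_cstC.
  exact: tfun_continuous (continuous_cstC mu) continuous_idC h3 h4.
Qed.

Lemma cvg_csinh_ratio (l : C) (g : C -> C) : continuous g -> csinh (g l) = csinh eta ->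
  (fun w => csinh eta / csinh (g w)) @ l^' --> (1 : C).
Proof.
move=> gc gl; rewrite -(divff eta_neq0) -{3}gl.
apply: cvg_within_filter; apply: (cvgCM (nbhs l)); first exact: continuous_cstC.
by apply: (cvgCV (nbhs l)); [rewrite gl | exact: (continuous_csinh_of gc l)].
Qed.

Lemma cvg_residue_tfun_l (l : C) :
  (fun w => (w - l) * tfun eta w l) @ l^' --> (1 : C).
Proof.
have -> : (fun w => (w - l) * tfun eta w l) =
    (fun w => (w - l) / csinh (w - l) * (csinh eta / csinh (w - l + eta))).
  by apply: funext => w; rewrite /tfun invfM; ring.
rewrite -(mulr1 1); apply: (cvgCM l^'); first exact: cvg_sub_div_csinh.
apply: cvg_csinh_ratio => //; last by rewrite subrr add0r.
exact: continuousCD (continuousCB continuous_idC (continuous_cstC l)) (continuous_cstC eta).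
Qed.

Lemma cvg_residue_tfun_r (l : C) :
  (fun w => (w - l) * tfun eta l w) @ l^' --> (-1 : C).
Proof.
have -> : (fun w => (w - l) * tfun eta l w) =
    (fun w => - ((w - l) / csinh (w - l)) * (csinh eta / csinh (l - w + eta))).
  by apply: funext => w; rewrite /tfun invfM -opprB csinhN invrN; ring.
rewrite -(mulr1 (-1)); apply: (cvgCM l^'); first exact: (cvgCN l^' (cvg_sub_div_csinh l)).
apply: cvg_csinh_ratio => //; last by rewrite subrr add0r.
exact: continuousCD (continuousCB (continuous_cstC l) continuous_idC) (continuous_cstC eta).
Qed.

Lemma cvg_residue_omega_entry (l : C) (s1 s2 : seq C) :
  (fun w => (w - l) * omega_entry w l (s1 ++ w :: s2)) @ l^'
    --> Yfun eta xi kappa l (s1 ++ l :: s2).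
Proof.
pose P w := \prod_(v <- s1 ++ w :: s2) csinh (v - l + eta).
pose Q w := \prod_(v <- s1 ++ w :: s2) csinh (v - l - eta).
have -> : (fun w => (w - l) * omega_entry w l (s1 ++ w :: s2)) =
    (fun w => afun eta xi l * ((w - l) * tfun eta w l) * P w
              - kappa * dfun xi l * ((w - l) * tfun eta l w) * Q w).
  by apply: funext => w; rewrite /omega_entry /P /Q; ring.
have cvg_prod (g : C -> C) : continuous g ->
    (fun w => \prod_(v <- s1 ++ w :: s2) g v) @ l^' --> \prod_(v <- s1 ++ l :: s2) g v.
  by move=> gc; apply: cvg_within_filter; exact: (continuous_prod_insert gc l).
rewrite (_ : Yfun _ _ _ _ _ = afun eta xi l * 1 * P l - kappa * dfun xi l * -1 * Q l);
  last by rewrite /Yfun /P /Q; ring.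
apply: (cvgCB l^'); apply: (cvgCM l^').
- by apply: (cvgCM l^'); [exact: cvgC_cst | exact: cvg_residue_tfun_l].
- exact: cvg_prod (continuous_csinh_shift _ _).
- by apply: (cvgCM l^'); [exact: cvgC_cst | exact: cvg_residue_tfun_r].
- exact: cvg_prod (continuous_csinh_shift _ _).
Qed.

Lemma Omega_minor n (rows cols nu : seq C) (r : 'I_n) :
  row' r (col' r (Omega eta xi kappa n rows cols nu)) =
  Omega eta xi kappa n.-1 (take r rows ++ drop r.+1 rows) (take r cols ++ drop r.+1 cols) nu.
Proof. by apply/matrixP => i k; rewrite !mxE /= !nth_bump. Qed.

Lemma residue_det_Omega (z ws lam e : seq C) (c : seq C -> C) :
  (size z < size lam)%N -> generic_points eta (z ++ lam) -> separately_continuous c ->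
  let l := nth 0 lam (size z) in
  residue (fun w => c (w :: ws) *
    \det (Omega eta xi kappa (size lam) (z ++ w :: ws) lam (z ++ w :: ws ++ e))) l
  = c (l :: ws) * Yfun eta xi kappa l (z ++ l :: ws ++ e) *
    \det (Omega eta xi kappa (size lam).-1 (z ++ ws)
            (take (size z) lam ++ drop (size z).+1 lam) (z ++ ws ++ l :: e)).
Proof.
move=> z_lam G c_cont l.
pose r : 'I_(size lam) := Ordinal z_lam.
pose M w := Omega eta xi kappa (size lam) (z ++ w :: ws) lam (z ++ w :: ws ++ e).
have Mrr w : M w r r = omega_entry w l (z ++ w :: ws ++ e).
  by rewrite /M OmegaE nth_cat_size_cons.
have Moff i j : i != r -> (fun w => M w i j) @ l^' --> M l i j.
  move=> ir; have ir' : (i : nat) != size z by [].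
  under eq_fun do rewrite /M OmegaE (nth_cat_cons_other _ _ _ _ l _ ir').
  rewrite /M OmegaE; apply: cvg_within_filter.
  exact: continuous_omega_entry_nu.
have Mrow j : j != r -> (fun w => (w - l) * M w r j) @ l^' --> 0.
  move=> jr; rewrite -(mul0r (M l r j)); apply: (cvgCM l^'); first exact: cvg_sub_dnbhs.
  under eq_fun do rewrite /M OmegaE nth_cat_size_cons.
  rewrite /M OmegaE nth_cat_size_cons; apply: cvg_within_filter.
  have lamG := generic_points_catr G; have jz : (j : nat) != size z by [].
  have [h1 h2] := generic_pointsP lamG z_lam (ltn_ord j) (contra_neq esym jz).
  have [h3 h4] := generic_pointsP lamG (ltn_ord j) z_lam jz.
  exact: omega_entry_row_continuous h1 h2 h3 h4.
have Mdiag : (fun w => (w - l) * M w r r) @ l^' --> Yfun eta xi kappa l (z ++ l :: ws ++ e).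
  under eq_fun do rewrite Mrr.
  exact: cvg_residue_omega_entry.
have cofactorE : cofactor (M l) r r = \det (Omega eta xi kappa (size lam).-1 (z ++ ws)
    (take (size z) lam ++ drop (size z).+1 lam) (z ++ ws ++ l :: e)).
  rewrite /cofactor -signr_odd addnn odd_double expr0 mul1r Omega_minor /=.
  rewrite take_drop_cat_cons; congr (\det _); apply: Omega_perm.
  by rewrite perm_cat2l -cat1s perm_catCA.
have lim_res : (fun w => (w - l) * (c (w :: ws) * \det (M w))) @ l^'
    --> c (l :: ws) * (Yfun eta xi kappa l (z ++ l :: ws ++ e) * cofactor (M l) r r).
  under eq_fun do rewrite mulrCA.
  apply: (cvgCM l^'); first by apply: cvg_within_filter; exact: c_cont [::] ws l.
  (* type class inference does not find the filter instance of [l^'] here *)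
  exact: (cvg_mul_det_row (FF := dnbhs_filter l) l^' r (fun w => w - l) M (M l) _
            Moff Mrow Mdiag).
by rewrite /residue (cvg_lim Cplx_hausdorff lim_res) mulrA cofactorE.
Qed.

Lemma separately_continuous_cons_Yfun (c : seq C -> C) (z e : seq C) (l : C) :
  separately_continuous c ->
  separately_continuous (fun ws => c (l :: ws) * Yfun eta xi kappa l (z ++ l :: ws ++ e)).
Proof.
move=> c_cont s1 s2; apply: continuousCM; first exact: c_cont (l :: s1) s2.
have -> : (fun w => Yfun eta xi kappa l (z ++ l :: (s1 ++ w :: s2) ++ e)) =
          (fun w => Yfun eta xi kappa l ((z ++ l :: s1) ++ w :: s2 ++ e)).
  by apply: funext => w; rewrite -catA /= -catA.
exact: continuous_Yfun_nu.
Qed.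

(* The induction carries the prefactor [c], a product of the Y's produced so far, and the
   tail [e] of the nu-list, made of the lambda's whose residues have been taken. *)
Lemma iter_residue_det_Omega (m : nat) (z lam e : seq C) (c : seq C -> C) :
  size lam = (size z + m)%N -> generic_points eta (z ++ lam) -> separately_continuous c ->
  iter_residue
    (fun w => c w * \det (Omega eta xi kappa (size lam) (z ++ w) lam (z ++ w ++ e)))
    (drop (size z) lam)
  = c (drop (size z) lam)
    * \prod_(a <- drop (size z) lam) Yfun eta xi kappa a (z ++ drop (size z) lam ++ e)
    * \det (Omega eta xi kappa (size z) z (take (size z) lam) (z ++ drop (size z) lam ++ e)).
Proof.
elim: m lam e c => [|m IH] lam e c lam_sz G c_cont.
  rewrite addn0 in lam_sz.
  by rewrite drop_oversize ?lam_sz // take_oversize ?lam_sz //= big_nil mulr1 cats0.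
have z_lam : (size z < size lam)%N by rewrite lam_sz addnS ltnS leq_addr.
rewrite (drop_nth 0 z_lam) /=.
set l := nth 0 lam (size z); set rest := drop (size z).+1 lam.
pose lam' := take (size z) lam ++ rest.
pose c' ws := c (l :: ws) * Yfun eta xi kappa l (z ++ l :: ws ++ e).
have lam'_sz : size lam' = (size z + m)%N.
  by rewrite /lam' size_cat size_take size_drop z_lam lam_sz; lia.
have -> : (fun ws => residue (fun w => c (w :: ws) *
      \det (Omega eta xi kappa (size lam) (z ++ w :: ws) lam (z ++ w :: ws ++ e))) l)
    = (fun ws => c' ws *
        \det (Omega eta xi kappa (size lam') (z ++ ws) lam' (z ++ ws ++ l :: e))).
  apply: funext => ws; rewrite residue_det_Omega //.
  by rewrite lam'_sz lam_sz addnS.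
have G' : generic_points eta (z ++ lam').
  have := generic_points_del (size z + size z) G.
  have lt1 : (size z + size z < size z)%N = false by rewrite ltnNge leq_addr.
  have lt2 : ((size z + size z).+1 < size z)%N = false by rewrite ltnNge -addnS leq_addr.
  by rewrite take_cat drop_cat lt1 lt2 addKn -addnS addKn -catA.
have := IH lam' (l :: e) c' lam'_sz G' (separately_continuous_cons_Yfun c z e l c_cont).
rewrite /lam' drop_size_cat ?take_size_cat ?size_take ?z_lam // => ->.
have p : perm_eq (z ++ rest ++ l :: e) (z ++ (l :: rest) ++ e).
  by rewrite perm_cat2l -cat1s perm_catCA.
rewrite /c' big_cons (Omega_perm p) !mulrA; congr (_ * _ * _).
by apply: eq_bigr => a _; exact: Yfun_perm.
Qed.

End OmegaResidues.

Theorem mainTheorem8 (R : realType) (eta : Cplx R) (xi : seq (Cplx R))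
    (kappa : Cplx R) (n N : nat) (lam z : seq (Cplx R)) :
  csinh eta != 0 ->
  (n <= N)%N -> size lam = N -> size z = n ->
  generic_points eta (z ++ lam) ->
  iter_residue
    (fun w => \det (Omega eta xi kappa N (z ++ w) lam (z ++ w)))
    (drop n lam)
  = (\prod_(a <- drop n lam) Yfun eta xi kappa a (z ++ drop n lam))
    * \det (Omega eta xi kappa n z (take n lam) (z ++ drop n lam)).
Proof.
move=> eta0 zlam lamN zn G; subst N n.
have one_cont : separately_continuous (fun _ : seq (Cplx R) => 1).
  by move=> s1 s2; exact: continuous_cstC.
have := iter_residue_det_Omega eta xi kappa eta0 (size lam - size z) z lam [::] _
  (esym (subnKC zlam)) G one_cont.
rewrite mul1r !cats0 => <-.
by congr iter_residue; apply: funext => w; rewrite mul1r cats0.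
Qed.
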